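(* Let $H$ be a graph with vertex set $A\cup B\cup\{v\}$, where $A$, $B$, $\{v\}$ are pairwise disjoint, $A$ is an independent set or a clique, $A$ and $B$ are complete to each other, and $v$ has both a neighbour and a non-neighbour in $A$. Let $F$ be a spanning subgraph of $H$ obtained from $H$ by removing some (possibly all) of the edges between $v$ and vertices of $A$. Then $H\xrightarrow{\cap} F$.
   Context: All graphs are finite and simple. For graphs $G_1=(V_1,E_1)$, $G_2=(V_2,E_2)$, $G_1\cap G_2=(V_1\cap V_2, E_1\cap E_2)$. For a graph $G=(V,E)$ and an injective map $\alpha$ on $V$, $G^{\alpha}$ has vertex set $\alpha(V)$ and edge set $\{\{\alpha(v),\alpha(w)\}: \{v,w\}\in E\}$. We write $G\xrightarrow{\cap} H$ if $H=G^{\alpha_1}\cap\cdots\cap G^{\alpha_k}$ for some $k\ge1$ and injective maps $\alpha_1,\dots,\alpha_k$ on $V(G)$. Sets are complete to each other if every vertex of one is adjacent to every vertex of the other. *)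

From mathcomp Require Import all_boot.
Set Implicit Arguments. Unset Strict Implicit. Unset Printing Implicit Defensive.

Record graph (T : finType) := Graph { gV : {set T}; gE : {set {set T}} }.

Definition simple (T : finType) (G : graph T) : Prop :=
  forall e, e \in gE G ->
    exists x y, [/\ x \in gV G, y \in gV G, x != y & e = [set x; y]].

Definition adj (T : finType) (G : graph T) (x y : T) : bool := [set x; y] \in gE G.

Definition gimage (T : finType) (G : graph T) (alpha : T -> T) : graph T :=
  Graph (alpha @: gV G) [set alpha @: e | e : {set T} in gE G].

(* G -cap-> H : H = G^{a_1} cap ... cap G^{a_k}, k >= 1, a_i injective on V(G) *)
Definition cap_reach (T : finType) (G H : graph T) : Prop :=
  exists (k : nat) (a : 'I_k.+1 -> T -> T),
    (forall i, {in gV G &, injective (a i)}) /\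
    gV H = \bigcap_i gV (gimage G (a i)) /\
    gE H = \bigcap_i gE (gimage G (a i)).

Definition independent (T : finType) (G : graph T) (A : {set T}) : Prop :=
  forall x y, x \in A -> y \in A -> x != y -> ~~ adj G x y.

Definition clique (T : finType) (G : graph T) (A : {set T}) : Prop :=
  forall x y, x \in A -> y \in A -> x != y -> adj G x y.

Definition complete_to (T : finType) (G : graph T) (A B : {set T}) : Prop :=
  forall x y, x \in A -> y \in B -> adj G x y.

From mathcomp Require Import all_boot fingroup perm.
Set Implicit Arguments. Unset Strict Implicit. Unset Printing Implicit Defensive.

(* Fix a non-neighbour m of v in A. For every removed edge vx, the
   transposition (x m) maps H onto the graph H - vx + vm: off v, the vertices
   x and m have the same neighbours, because A is a clique or independent and
   is complete to B. Intersecting these images with H itself deletes exactly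
   the removed edges. *)

(* The extra index #|I| is out of range of [enum I] and selects i0. *)
Lemma bigcap_nth_enum (U I : finType) (i0 : I) (F : I -> {set U}) :
  \bigcap_(j < #|I|.+1) F (nth i0 (enum I) j) = \bigcap_i F i.
Proof.
apply/setP => z; apply/bigcapP/bigcapP => [zF i _|zF j _]; last exact: zF.
have iI : index i (enum I) < #|I|.+1 by rewrite cardE ltnS index_size.
by have := zF (Ordinal iI) isT; rewrite /= nth_index ?mem_enum.
Qed.

Section GraphImages.

Variable T : finType.

Lemma adjC (G : graph T) p q : adj G p q = adj G q p.
Proof. by rewrite /adj setUC. Qed.

Lemma simple_adj (G : graph T) p q :
  simple G -> adj G p q -> [/\ p \in gV G, q \in gV G & p != q].
Proof.
move=> sG /sG [x [y [xV yV xy e]]].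
have inV z : z \in [set p; q] -> z \in gV G.
  by rewrite e !inE => /orP[]/eqP->.
split; [apply: inV | apply: inV | ]; rewrite ?inE ?eqxx ?orbT //.
by move: (cards2 p q); rewrite e cards2 xy; case: (p != q).
Qed.

Lemma simple_adj_irrefl (G : graph T) p : simple G -> adj G p p = false.
Proof. by move=> sG; apply/negP => /(simple_adj sG) [_ _]; rewrite eqxx. Qed.

Lemma adj_tperm_twins (G : graph T) (S : {pred T}) x m :
  simple G ->
  {in S, forall q, q != x -> q != m -> adj G x q = adj G m q} ->
  {in S &, forall p q, adj G (tperm x m p) (tperm x m q) = adj G p q}.
Proof.
move=> sG twin p q pS qS.
have loops z : adj G z z = false by apply: simple_adj_irrefl.
case: tpermP => [->|->|/eqP px /eqP pm]; case: tpermP => [->|->|/eqP qx /eqP qm];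
  rewrite ?loops // ?(adjC G m x) // ?(adjC G p) ?twin //.
Qed.

Lemma gimage_perm_edge (G : graph T) (s : {perm T}) e :
  (e \in gE (gimage G s)) = ((s^-1)%g @: e \in gE G).
Proof.
apply/imsetP/idP => [[f fE ->]|eE].
  by rewrite -imset_comp (eq_imset _ (permK s)) imset_id.
by exists ((s^-1)%g @: e); rewrite // -imset_comp (eq_imset _ (permKV s)) imset_id.
Qed.

Lemma gimage_perm_vertices (G : graph T) (s : {perm T}) :
  perm_on (gV G) s -> gV (gimage G s) = gV G.
Proof. exact: im_perm_on. Qed.

Lemma cap_reach_family (I : finType) (i0 : I) (G H : graph T) (a : I -> T -> T) :
  (forall i, {in gV G &, injective (a i)}) ->
  gV H = \bigcap_i gV (gimage G (a i)) ->
  gE H = \bigcap_i gE (gimage G (a i)) ->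
  cap_reach G H.
Proof.
move=> inj HV HE; exists #|I|, (fun j => a (nth i0 (enum I) j)).
split; first by move=> j; apply: inj.
by rewrite (bigcap_nth_enum i0 (fun i => gV (gimage G (a i))))
           (bigcap_nth_enum i0 (fun i => gE (gimage G (a i)))).
Qed.

End GraphImages.

Section SwapInA.

Variables (T : finType) (H : graph T) (A B : {set T}) (v : T).
Hypotheses (sH : simple H) (HV : gV H = A :|: B :|: [set v])
  (A_homogeneous : independent H A \/ clique H A) (AB : complete_to H A B).

Lemma adj_A_twins x y :
  x \in A -> y \in A ->
  {in predC1 v, forall q, q != x -> q != y -> adj H x q = adj H y q}.
Proof.
suff to_twin a b q : a \in A -> b \in A -> q != v -> q != b ->
    adj H a q -> adj H b q.
  by move=> xA yA q /= qv qx qy; apply/idP/idP; apply: to_twin.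
move=> aA bA qv qb aq; have [_ + aq'] := simple_adj sH aq.
rewrite HV !inE (negPf qv) orbF => /orP[qA|qB]; last exact: AB.
case: A_homogeneous => [indep|cl]; last by apply: cl => //; rewrite eq_sym.
by move: (indep a q aA qA aq'); rewrite aq.
Qed.

Variable m : T.
Hypotheses (vA : v \notin A) (mA : m \in A) (vm : ~~ adj H v m).

Lemma tperm_edge x e :
  x \in A -> e \in gE H -> e != [set v; x] -> tperm x m @: e \in gE H.
Proof.
move=> xA eH ne_vx.
have [p [q [_ _ _ epq]]] := sH eH; subst e.
have xv : x != v by apply: contraNneq vA => <-.
have mv : m != v by apply: contraNneq vA => <-.
have v_edge z : adj H v z -> [set v; z] != [set v; x] ->
    adj H (tperm x m v) (tperm x m z).
  move=> vz vz_x; rewrite tpermD //; case: tpermP => [zx|zm|//].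
    by rewrite zx eqxx in vz_x.
  by move: vm; rewrite -zm vz.
rewrite imsetU1 imset_set1; change (adj H (tperm x m p) (tperm x m q)).
case: (eqVneq p v) => [pv|pv]; first by subst p; exact: v_edge.
case: (eqVneq q v) => [qv|qv].
  by subst q; rewrite adjC; apply: v_edge; [rewrite adjC | rewrite setUC].
by rewrite (adj_tperm_twins sH (adj_A_twins xA mA)).
Qed.

Variable F : graph T.
Hypotheses (FE : gE F \subset gE H)
  (removedE : forall e, e \in gE H -> e \notin gE F ->
                exists2 a, a \in A & e = [set v; a]).

Definition removal_swap x : {perm T} :=
  if (x \in A) && ([set v; x] \in gE H :\: gE F) then tperm x m else 1%g.

Lemma removal_swap_on x : perm_on (gV H) (removal_swap x).
Proof.
rewrite /removal_swap; case: ifP => [/andP[xA _]|_]; last exact: perm_on1.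
by apply: subset_trans (tperm_on x m) _; rewrite subUset !sub1set HV !inE xA mA.
Qed.

Lemma removal_swap_edge x e :
  (e \in gE (gimage H (removal_swap x))) = (removal_swap x @: e \in gE H).
Proof. by rewrite gimage_perm_edge /removal_swap; case: ifP; rewrite ?tpermV ?invg1. Qed.

Lemma removal_swap_id : removal_swap m = 1%g.
Proof. by rewrite /removal_swap ifN //; have := vm; apply: contraNN => /andP[_ /setDP[]]. Qed.

Lemma edge_removal_swap x e :
  e \in gE F -> e \in gE (gimage H (removal_swap x)).
Proof.
move=> eF; have eH : e \in gE H by apply: (subsetP FE).
rewrite removal_swap_edge /removal_swap.
case: ifP => [/andP[xA /setDP[_ vxF]]|_]; last by rewrite imset_perm1.
by apply: tperm_edge => //; apply: contraNneq vxF => <-.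
Qed.

Lemma edge_all_removal_swaps e :
  (forall x, e \in gE (gimage H (removal_swap x))) -> e \in gE F.
Proof.
move=> e_in; have := e_in m; rewrite removal_swap_edge removal_swap_id imset_perm1.
move=> eH; apply/negPn/negP => eF; have [x xA ex] := removedE eH eF.
have [xv mv] : x != v /\ m != v by split; apply: contraNneq vA => <-.
move: (e_in x); rewrite removal_swap_edge /removal_swap ifT; last first.
  by rewrite xA -ex inE eF eH.
rewrite ex imsetU1 imset_set1 tpermL tpermD // => vmH.
by move: vm; rewrite /adj vmH.
Qed.

End SwapInA.

Theorem mainTheorem5 (T : finType) (H F : graph T) (A B : {set T}) (v : T) :
  simple H ->
  gV H = A :|: B :|: [set v] ->
  [disjoint A & B] -> v \notin A -> v \notin B ->
  (independent H A \/ clique H A) ->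
  complete_to H A B ->
  (exists2 a, a \in A & adj H v a) ->
  (exists2 a, a \in A & ~~ adj H v a) ->
  gV F = gV H ->
  gE F \subset gE H ->
  (forall e, e \in gE H -> e \notin gE F -> exists2 a, a \in A & e = [set v; a]) ->
  cap_reach H F.
Proof.
move=> sH HV _ vA _ hA AB _ [m mA vm] FV FE removedE.
apply: (cap_reach_family m (a := removal_swap H A v m F)).
- by move=> x y z _ _; apply: perm_inj.
- rewrite FV; apply/setP => z.
  apply/idP/bigcapP => [zV x _|/(_ m isT)];
    by rewrite gimage_perm_vertices // (removal_swap_on HV).
apply/setP => e; apply/idP/bigcapP => [eF x _|e_in].
  exact: (edge_removal_swap sH HV hA AB vA mA vm FE).
by apply: (edge_all_removal_swaps vA mA vm removedE) => x; apply: e_in.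
Qed.
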